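(* Let $A$ ($m_a\times n_a$) and $B$ ($m_b\times n_b$) be Hamming parity check matrices over $\mathbb{F}_q$ with $n_a=(q^{m_a}-1)/(q-1)\ge3$, $n_b=(q^{m_b}-1)/(q-1)\ge3$, and let $C=\{{\bf x}\in\mathbb{F}_q^{n_an_b}:(A\otimes B){\bf x}^t={\bf 0}\}$. Then for every ${\bf v}\in\mathbb{F}_q^{n_an_b}$, the Hamming distance from ${\bf v}$ to $C$ equals $\mathrm{rank}(B\,V_{\bf v}\,A^t)$ (equivalently, the rank of the main submatrix representation $M_{\bf v}$ when $A,B$ are normalized to have the standard basis vectors as their first columns).
   Context: A Hamming parity check matrix of size $m\times n$ over $\mathbb{F}_q$, $n=(q^m-1)/(q-1)$, has as columns one nonzero representative of each one-dimensional subspace of $\mathbb{F}_q^m$. $A\otimes B$ is the Kronecker product (each entry $a_{r,s}$ of $A$ replaced by the block $a_{r,s}B$). For ${\bf x}\in\mathbb{F}_q^{n_an_b}$, $V_{\bf x}$ is the $n_b\times n_a$ matrix with $(V_{\bf x})_{i,j}=x_{(j-1)n_b+i}$, so that $(A\otimes B){\bf x}^t={\bf 0}$ iff $BV_{\bf x}A^t=0$. $d({\bf v},C)=\min_{{\bf c}\in C}\mathrm{wt}({\bf v}-{\bf c})$ with $\mathrm{wt}$ the Hamming weight. *)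

From HB Require Import structures.
From mathcomp Require Import all_boot all_order all_algebra all_field.
Set Implicit Arguments. Unset Strict Implicit. Unset Printing Implicit Defensive.
Import GRing.Theory.
Local Open Scope ring_scope.

Lemma kidx_hi_proof m n (k : 'I_(m * n)) : (k %/ n < m)%N.
Proof.
case: n k => [|n] k; first by case: k => i; rewrite muln0.
by rewrite ltn_divLR // ltn_ord.
Qed.
Lemma kidx_lo_proof m n (k : 'I_(m * n)) : (k %% n < n)%N.
Proof.
case: n k => [|n] k; first by case: k => i; rewrite muln0.
by rewrite ltn_pmod.
Qed.
Definition kidx_hi m n (k : 'I_(m * n)) : 'I_m := Ordinal (kidx_hi_proof k).
Definition kidx_lo m n (k : 'I_(m * n)) : 'I_n := Ordinal (kidx_lo_proof k).

(* Kronecker product A (x) B: entry (r*mb + r', s*nb + s') is a_{r,s} b_{r',s'}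
   (0-based; i.e. each a_{r,s} replaced by the block a_{r,s} B). *)
Definition kron (R : pzRingType) ma na mb nb
  (A : 'M[R]_(ma, na)) (B : 'M[R]_(mb, nb)) : 'M[R]_(ma * mb, na * nb) :=
  \matrix_(k, l) (A (kidx_hi k) (kidx_hi l) * B (kidx_lo k) (kidx_lo l)).

(* V_x : the nb x na matrix with (V_x)_{i,j} = x_{j*nb + i} (0-based). *)
Definition Vmat (R : pzRingType) na nb (x : 'rV[R]_(na * nb)) : 'M[R]_(nb, na) :=
  \matrix_(i, j) x 0 (mxvec_index j i).

(* Hamming parity check matrix: every column is nonzero and every nonzero
   vector of F^m is a scalar multiple of exactly one column, i.e. the
   columns are one nonzero representative of each 1-dim subspace. *)
Definition hamming_pcm (F : fieldType) m n (H : 'M[F]_(m, n)) : Prop :=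
  (forall j, col j H != 0) /\
  (forall x : 'cV[F]_m, x != 0 -> exists! j, exists c : F, x = c *: col j H).

Definition wt (R : nmodType) n (x : 'rV[R]_n) : nat := #|[set j | x 0 j != 0]|.

Definition dist (F : finFieldType) n (v : 'rV[F]_n) (C : pred 'rV[F]_n) : nat :=
  \big[minn/n]_(c : 'rV[F]_n | C c) wt (v - c).

Definition kron_code (F : finFieldType) ma na mb nb
  (A : 'M[F]_(ma, na)) (B : 'M[F]_(mb, nb)) : pred 'rV[F]_(na * nb) :=
  fun x => kron A B *m x^T == 0.

From HB Require Import structures.
From mathcomp Require Import all_boot all_order all_algebra all_field.
Set Implicit Arguments. Unset Strict Implicit. Unset Printing Implicit Defensive.
Import GRing.Theory.
Local Open Scope ring_scope.

(* Reshaping x into the matrix V_x turns the Kronecker syndrome into a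
   two-sided product: (A (x) B) x^t = 0 iff B V_x A^t = 0 (kron_codeP).
   Writing S := B V_v A^t, the two bounds on d(v, C) are:
   - lower bound: for c in C, S = B V_(v-c) A^t, so
       rank S <= rank V_(v-c) <= #(nonzero entries of V_(v-c)) = wt(v-c);
   - upper bound: every rank-one matrix u t equals B (a E_ji) A^t, because
     u and t^T are scalar multiples of columns of B and A (the Hamming
     covering property).  Splitting S into rank S rank-one terms gives W
     with B W A^t = S and at most rank S nonzero entries; the word
     c := v - vec(W) lies in C and wt(v - c) <= rank S. *)

Lemma val_enum_rank (T : finType) (x : T) : val (enum_rank x) = index x (enum T).
Proof.
rewrite /enum_rank enum_rank_in.unlock insubdK //.
by rewrite unfold_in /= cardE index_mem mem_enum.
Qed.

Lemma index_allpairs (T1 T2 : eqType) (s1 : seq T1) (s2 : seq T2) x1 x2 :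
  x1 \in s1 -> x2 \in s2 ->
  index (x1, x2) [seq (y1, y2) | y1 <- s1, y2 <- s2] =
    (index x1 s1 * size s2 + index x2 s2)%N.
Proof.
elim: s1 => //= y s1 IH; rewrite in_cons index_cat => x1_in x2_in.
have pair_inj : injective (@pair T1 T2 y) := fun a b E => congr1 snd E.
have [<-|ne_y] := eqVneq y x1; first by rewrite (mem_map pair_inj) x2_in index_map.
have -> : ((x1, x2) \in [seq (y, y2) | y2 <- s2]) = false.
  by apply/negbTE/mapP => -[z _ [E _]]; rewrite E eqxx in ne_y.
by rewrite size_map IH ?mulSn ?addnA //; move: x1_in; rewrite eq_sym (negbTE ne_y).
Qed.

Lemma val_mxvec_index m n (i : 'I_m) (j : 'I_n) : val (mxvec_index i j) = (i * n + j)%N.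
Proof.
have enum_pairs : enum {: 'I_m * 'I_n} =
    [seq (x1, x2) | x1 <- enum 'I_m, x2 <- enum 'I_n] by rewrite enumT unlock.
rewrite /mxvec_index /= val_enum_rank enum_pairs index_allpairs ?mem_enum //.
by rewrite !index_enum_ord size_enum_ord.
Qed.

Lemma kidx_hi_mxvec m n (i : 'I_m) (j : 'I_n) : kidx_hi (mxvec_index i j) = i.
Proof.
apply: val_inj; change (val (mxvec_index i j) %/ n = i)%N.
rewrite val_mxvec_index divnMDl ?divn_small ?addn0 //.
exact: leq_ltn_trans (ltn_ord j).
Qed.

Lemma kidx_lo_mxvec m n (i : 'I_m) (j : 'I_n) : kidx_lo (mxvec_index i j) = j.
Proof.
apply: val_inj; change (val (mxvec_index i j) %% n = j)%N.
by rewrite val_mxvec_index modnMDl modn_small.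
Qed.

Lemma Vmat_vec_mx (R : pzRingType) na nb (x : 'rV[R]_(na * nb)) : Vmat x = (vec_mx x)^T.
Proof. by apply/matrixP => i j; rewrite !mxE. Qed.

Lemma VmatB (R : pzRingType) na nb (x y : 'rV[R]_(na * nb)) :
  Vmat (x - y) = Vmat x - Vmat y.
Proof. by rewrite !Vmat_vec_mx !linearB. Qed.

Lemma Vmat_mxvec (R : pzRingType) na nb (W : 'M[R]_(nb, na)) : Vmat (mxvec W^T) = W.
Proof. by rewrite Vmat_vec_mx mxvecK trmxK. Qed.

Lemma kron_mulmx (R : comPzRingType) ma na mb nb (A : 'M[R]_(ma, na))
    (B : 'M[R]_(mb, nb)) (x : 'rV[R]_(na * nb)) :
  kron A B *m x^T = (mxvec (B *m Vmat x *m A^T)^T)^T.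
Proof.
apply/colP => k; case/mxvec_indexP: k => r r'.
rewrite !mxE mxvecE !mxE (reindex (uncurry (@mxvec_index na nb))) /=; last first.
  by case: (curry_mxvec_bij na nb) => g g1 g2; exists g => z _; [exact: g1|exact: g2].
pose term s s' := kron A B (mxvec_index r r') (mxvec_index s s') * x^T (mxvec_index s s') 0.
rewrite (eq_bigr (fun p => term p.1 p.2)); last by case.
rewrite -(pair_bigA _ term) /=.
apply: eq_bigr => s _; rewrite !mxE mulr_suml; apply: eq_bigr => s' _ /=.
by rewrite /term !mxE !kidx_hi_mxvec !kidx_lo_mxvec [RHS]mulrC mulrA.
Qed.

Lemma kron_codeP (F : finFieldType) ma na mb nb (A : 'M[F]_(ma, na))
    (B : 'M[F]_(mb, nb)) (x : 'rV[F]_(na * nb)) :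
  kron_code A B x <-> B *m Vmat x *m A^T = 0.
Proof.
rewrite /kron_code kron_mulmx; split=> [/eqP E|->]; last by rewrite !linear0.
apply: trmx_inj; apply: (can_inj (@mxvecK _ _ _)).
by rewrite -[LHS]trmxK E !linear0.
Qed.

Definition mxsupport (R : nmodType) m n (M : 'M[R]_(m, n)) : {set 'I_m * 'I_n} :=
  [set p | M p.1 p.2 != 0].

Lemma wt_Vmat (R : pzRingType) na nb (x : 'rV[R]_(na * nb)) :
  wt x = #|mxsupport (Vmat x)|.
Proof.
pose flat (p : 'I_nb * 'I_na) := mxvec_index p.2 p.1.
have flat_inj : injective flat.
  by move=> [j i] [j' i'] /cast_ord_inj/enum_rank_inj [-> ->].
rewrite /wt -(card_imset _ flat_inj); apply: eq_card => k.
case/mxvec_indexP: k => i j; rewrite inE; apply/idP/imsetP => [nz|[[j' i'] + E]].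
  by exists (j, i); rewrite // inE /= mxE.
by rewrite inE /= mxE E.
Qed.

Lemma mxrank_sum_le (F : fieldType) (I : finType) (P : pred I) m n
    (M : I -> 'M[F]_(m, n)) :
  (\rank (\sum_(i | P i) M i)%R <= \sum_(i | P i) \rank (M i))%N.
Proof.
apply: (big_ind2 (fun (X : 'M[F]_(m, n)) k => \rank X <= k)%N) => [|X1 k1 X2 k2 le1 le2|//].
  by rewrite mxrank0.
exact: leq_trans (mxrank_add _ _) (leq_add le1 le2).
Qed.

(* The rank of a matrix is at most its number of nonzero entries: the matrix
   is a sum of that many scaled matrix units, each of rank at most one. *)
Lemma mxrank_le_support (F : fieldType) m n (M : 'M[F]_(m, n)) :
  (\rank M <= #|mxsupport M|)%N.
Proof.
have sumM : M = (\sum_(p in mxsupport M) M p.1 p.2 *: delta_mx p.1 p.2)%R.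
  rewrite {1}[M]matrix_sum_delta pair_bigA (bigID (mem (mxsupport M))) /=.
  by rewrite [X in _ + X]big1 ?addr0 // => p; rewrite inE negbK => /eqP ->; rewrite scale0r.
rewrite {1}sumM; apply: leq_trans (mxrank_sum_le _ _) _.
rewrite -sum1_card; apply: leq_sum => p _.
by apply: leq_trans (mxrank_scale _ _) _; rewrite mxrank_delta.
Qed.

(* Covering property: every vector (zero included) is a scalar multiple of
   some column of H.  This is the only feature of Hamming matrices used. *)
Definition columns_cover (F : fieldType) m n (H : 'M[F]_(m, n)) : Prop :=
  forall x : 'cV[F]_m, exists j, exists c : F, x = c *: col j H.

Lemma hamming_columns_cover (F : fieldType) m n (H : 'M[F]_(m, n)) :
  hamming_pcm H -> (0 < n)%N -> columns_cover H.
Proof.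
move=> [_ cover] n_gt0 x; have [->|x_nz] := eqVneq x 0.
  by exists (Ordinal n_gt0), 0; rewrite scale0r.
by have [j [[c Ec] _]] := cover x x_nz; exists j, c.
Qed.

Lemma col_mul_row (R : pzRingType) m n k p (B : 'M[R]_(m, n)) (C : 'M[R]_(k, p))
    (j : 'I_n) (i : 'I_k) :
  col j B *m row i C = B *m delta_mx j i *m C.
Proof. by rewrite colE rowE mulmxA -(mulmxA B) mul_delta_mx. Qed.

Lemma rank_one_image (F : fieldType) ma na mb nb (A : 'M[F]_(ma, na))
    (B : 'M[F]_(mb, nb)) :
  columns_cover B -> columns_cover A ->
  forall (u : 'cV[F]_mb) (t : 'rV[F]_ma),
  exists j, exists i, exists c : F, u *m t = B *m (c *: delta_mx j i) *m A^T.
Proof.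
move=> coverB coverA u t.
have [j [c ->]] := coverB u; have [i [d Et]] := coverA t^T.
have -> : t = d *: row i A^T by rewrite -[t]trmxK Et linearZ /= tr_col.
exists j, i, (c * d).
by rewrite -scalemxAl -scalemxAr scalerA col_mul_row -scalemxAr -scalemxAl.
Qed.

Lemma mulmx_sum_col_row (R : pzRingType) m n p (X : 'M[R]_(m, n)) (Y : 'M[R]_(n, p)) :
  X *m Y = \sum_(k < n) col k X *m row k Y.
Proof.
apply/matrixP => i j; rewrite !mxE summxE; apply: eq_bigr => k _.
by rewrite !mxE big_ord1 !mxE.
Qed.

(* Under the covering property, every S is B W A^T for a W with at most
   rank S nonzero entries: write S as a sum of rank S rank-one matrices and
   realise each one by a single scaled matrix unit. *)
Lemma sparse_preimage (F : fieldType) ma na mb nb (A : 'M[F]_(ma, na))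
    (B : 'M[F]_(mb, nb)) :
  columns_cover B -> columns_cover A ->
  forall S : 'M[F]_(mb, ma),
  exists2 W : 'M[F]_(nb, na), B *m W *m A^T = S & (#|mxsupport W| <= \rank S)%N.
Proof.
move=> coverB coverA S.
pose term (p : 'I_nb * 'I_na * F) := p.2 *: delta_mx p.1.1 p.1.2.
have /fin_all_exists [f Ef] : forall k : 'I_(\rank S), exists p,
    col k (col_base S) *m row k (row_base S) = B *m term p *m A^T.
  move=> k; have [j [i [c E]]] := rank_one_image coverB coverA
    (col k (col_base S)) (row k (row_base S)).
  by exists (j, i, c).
exists (\sum_k term (f k)).
  rewrite mulmx_sumr mulmx_suml -[RHS]mulmx_base mulmx_sum_col_row.
  by apply: eq_bigr => k _; rewrite Ef.
have support_hit : mxsupport (\sum_k term (f k)) \subset [set (f k).1 | k in 'I_(\rank S)].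
  apply/subsetP => -[j i]; rewrite inE /=.
  apply: contraR => not_hit; rewrite summxE big1 // => k _.
  rewrite !mxE; have [Ej|] := eqVneq j (f k).1.1; last by rewrite mulr0.
  have [Ei|] := eqVneq i (f k).1.2; last by rewrite mulr0.
  by case/negP: not_hit; apply/imsetP; exists k => //; rewrite Ej Ei -surjective_pairing.
apply: leq_trans (subset_leq_card support_hit) _.
by apply: leq_trans (leq_imset_card _ _) _; rewrite card_ord.
Qed.

Lemma bigmin_le (I : eqType) (s : seq I) (P : pred I) (G : I -> nat) (n : nat) (i : I) :
  i \in s -> P i -> (\big[minn/n]_(j <- s | P j) G j <= G i)%N.
Proof.
elim: s => //= j s IH; rewrite in_cons big_cons => /orP[/eqP<- ->|/IH le_i Pi].
  exact: geq_minl.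
by case: (P j); [apply: leq_trans (geq_minr _ _) (le_i Pi)|apply: le_i].
Qed.

Lemma distE (F : finFieldType) n (v : 'rV[F]_n) (C : pred 'rV[F]_n) (k : nat) :
  (exists2 c, C c & wt (v - c) <= k)%N ->
  (forall c, C c -> k <= wt (v - c))%N ->
  dist v C = k.
Proof.
move=> [c0 Cc0 le_c0] lower; apply/eqP; rewrite eqn_leq; apply/andP; split.
  exact: leq_trans (bigmin_le _ _ (mem_index_enum c0) Cc0) le_c0.
apply: (big_ind (fun d => k <= d)%N) => [|d1 d2 le1 le2|c Cc]; last exact: lower.
  apply: leq_trans (lower c0 Cc0) _.
  by apply: leq_trans (max_card _) _; rewrite card_ord.
by rewrite leq_min le1 le2.
Qed.

Theorem mainTheorem4 (F : finFieldType) (ma na mb nb : nat)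
  (A : 'M[F]_(ma, na)) (B : 'M[F]_(mb, nb)) :
  hamming_pcm A -> hamming_pcm B ->
  na = ((#|F| ^ ma).-1 %/ (#|F|).-1)%N -> (3 <= na)%N ->
  nb = ((#|F| ^ mb).-1 %/ (#|F|).-1)%N -> (3 <= nb)%N ->
  forall v : 'rV[F]_(na * nb),
    dist v (kron_code A B) = \rank (B *m Vmat v *m A^T).
Proof.
move=> hamA hamB _ na_ge3 _ nb_ge3 v.
have coverA := hamming_columns_cover hamA (ltn_trans (ltn0Sn 1) na_ge3).
have coverB := hamming_columns_cover hamB (ltn_trans (ltn0Sn 1) nb_ge3).
have syndrome_shift c : kron_code A B c ->
    B *m Vmat (v - c) *m A^T = B *m Vmat v *m A^T.
  by move/kron_codeP => Cc; rewrite VmatB mulmxBr mulmxBl Cc subr0.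
apply: distE => [|c Cc].
  have [W SW suppW] := sparse_preimage coverB coverA (B *m Vmat v *m A^T).
  have Cw : kron_code A B (v - mxvec W^T).
    by apply/kron_codeP; rewrite VmatB mulmxBr mulmxBl Vmat_mxvec SW subrr.
  by exists (v - mxvec W^T); rewrite // opprB addrC subrK wt_Vmat Vmat_mxvec.
rewrite -(syndrome_shift c Cc) wt_Vmat.
apply: leq_trans (mxrankM_maxl _ _) _; apply: leq_trans (mxrankM_maxr _ _) _.
exact: mxrank_le_support.
Qed.
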